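(* Let $x_0>0$, $L>0$, and let $\gamma$ be an admissible curve parametrized by arc length. Let $\mathcal V$ be a first-order area-preserving admissible variation of $\gamma$ with velocity $X$ and acceleration $X'$. Then there exists an area-preserving admissible variation $\tilde{\mathcal V}$ of $\gamma$, with velocity $\tilde X$ and acceleration $\tilde X'$, such that $\tilde X=X$ on $[0,2L]$ and $\tilde X'=X'$ on $[0,\frac L2]\cup[\frac{3L}2,2L]$.
   Context: Notation: $(\xi,\eta)^\perp=(\eta,-\xi)$; for a regular curve $\gamma\in C^2([0,2L],\mathbb R^2)$ ($|\dot\gamma|>0$), curvature $H=\langle\dot\gamma,\ddot\gamma^\perp\rangle/|\dot\gamma|^3$, normal $N=\dot\gamma^\perp/|\dot\gamma|$; strictly counterclockwise means $H>0$. A curve $\gamma=(x,y)$ is admissible if $\gamma\in C^\infty([0,2L],\mathbb R^2)$ is regular, strictly counterclockwise, injective, $\gamma(0)=(x_0,0)$, $\gamma(2L)=(-x_0,0)$, $y>0$ on $(0,2L)$. Enclosed area: $\mathcal A(\gamma)=\frac12\int_0^{2L}(x\dot y-\dot x y)\,ds$. An admissible variation is a smooth $\mathcal V:[0,2L]\times[-t_{\mathcal V},t_{\mathcal V}]\to\mathbb R^2$ with $\mathcal V(\cdot,0)=\gamma$ and $\gamma_t=\mathcal V(\cdot,t)$ admissible for all $t$; velocity $X=\partial_t\mathcal V|_{t=0}$, acceleration $X'=\partial_t^2\mathcal V|_{t=0}$. It is area-preserving if $\mathcal A(\gamma_t)=\mathcal A(\gamma)$ for all $t$, and first-order area-preserving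 if $\int_0^{2L}\langle X,N\rangle\,ds=0$ (for arc-length parametrized $\gamma$). *)

From Stdlib Require Import Reals List.
From Coquelicot Require Import Coquelicot.
Open Scope R_scope.

(** A function on a closed interval / closed rectangle is C^oo
    iff it is the restriction of a C^oo function on R / R^2 (Whitney/Seeley
    extension).  We therefore model curves and variations as globally defined
    smooth maps and only impose conditions on [0,2L] resp. [0,2L]x[-t,t]. *)

Definition smooth1 (f : R -> R) : Prop := forall (n : nat) (x : R), ex_derive_n f n x.

Definition pd (b : bool) (f : R -> R -> R) : R -> R -> R :=
  fun s t => if b then Derive (fun u => f u t) s else Derive (fun u => f s u) t.

Definition iter_pd (ds : list bool) (f : R -> R -> R) : R -> R -> R :=
  fold_right pd f ds.

Definition smooth2 (f : R -> R -> R) : Prop :=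
  forall (ds : list bool) (s t : R),
    continuity_2d_pt (iter_pd ds f) s t /\
    ex_derive (fun u => iter_pd ds f u t) s /\
    ex_derive (fun u => iter_pd ds f s u) t.

Definition cx (g : R -> R * R) : R -> R := fun s => fst (g s).
Definition cy (g : R -> R * R) : R -> R := fun s => snd (g s).

Definition dot (u v : R * R) : R := fst u * fst v + snd u * snd v.
Definition perp (u : R * R) : R * R := (snd u, - fst u).

Definition vel (g : R -> R * R) (s : R) : R * R :=
  (Derive (cx g) s, Derive (cy g) s).
Definition acc (g : R -> R * R) (s : R) : R * R :=
  (Derive_n (cx g) 2 s, Derive_n (cy g) 2 s).

Definition speed (g : R -> R * R) (s : R) : R := sqrt (dot (vel g s) (vel g s)).

Definition curvature (g : R -> R * R) (s : R) : R :=
  dot (vel g s) (perp (acc g s)) / (speed g s) ^ 3.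

Definition normal (g : R -> R * R) (s : R) : R * R :=
  (fst (perp (vel g s)) / speed g s, snd (perp (vel g s)) / speed g s).

Definition admissible (x0 L : R) (g : R -> R * R) : Prop :=
  smooth1 (cx g) /\ smooth1 (cy g) /\
  (forall s, 0 <= s <= 2 * L -> 0 < speed g s) /\
  (forall s, 0 <= s <= 2 * L -> 0 < curvature g s) /\
  (forall s1 s2, 0 <= s1 <= 2 * L -> 0 <= s2 <= 2 * L -> g s1 = g s2 -> s1 = s2) /\
  g 0 = (x0, 0) /\ g (2 * L) = (- x0, 0) /\
  (forall s, 0 < s < 2 * L -> 0 < cy g s).

Definition arclength_param (L : R) (g : R -> R * R) : Prop :=
  forall s, 0 <= s <= 2 * L -> speed g s = 1.

Definition area (L : R) (g : R -> R * R) : R :=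
  / 2 * RInt (fun s => cx g s * Derive (cy g) s - Derive (cx g) s * cy g s) 0 (2 * L).

Definition curve_at (V : R -> R -> R * R) (t : R) : R -> R * R := fun s => V s t.

Definition admissible_variation (x0 L : R) (g : R -> R * R)
    (V : R -> R -> R * R) (tV : R) : Prop :=
  0 < tV /\
  smooth2 (fun s t => fst (V s t)) /\ smooth2 (fun s t => snd (V s t)) /\
  (forall s, 0 <= s <= 2 * L -> V s 0 = g s) /\
  (forall t, - tV <= t <= tV -> admissible x0 L (curve_at V t)).

Definition var_velocity (V : R -> R -> R * R) (s : R) : R * R :=
  (Derive (fun t => fst (V s t)) 0, Derive (fun t => snd (V s t)) 0).
Definition var_acceleration (V : R -> R -> R * R) (s : R) : R * R :=
  (Derive_n (fun t => fst (V s t)) 2 0, Derive_n (fun t => snd (V s t)) 2 0).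

Definition area_preserving (L : R) (g : R -> R * R) (V : R -> R -> R * R) (tV : R) : Prop :=
  forall t, - tV <= t <= tV -> area L (curve_at V t) = area L g.

Definition first_order_area_preserving (L : R) (g : R -> R * R) (V : R -> R -> R * R) : Prop :=
  RInt (fun s => dot (var_velocity V s) (normal g s)) 0 (2 * L) = 0.

(* Only the x-coordinate is perturbed: Vt(s,t) = V(s,t) + (lam(t) psi(V(s,t)), 0), where psi is a
   smooth bump centred at a point g(s0), L/2 < s0 < 3L/2, with y'(s0) <> 0, small enough that
   psi(g(s)) = 0 away from s0.  The area of the perturbed curve is A(t) + lam(t) B(t), where
   B(0) = int psi(g) y' <> 0 after an integration by parts, and A'(0) = 0 is the first-order area
   condition.  So lam = (A(0) - A) / B is smooth with lam(0) = lam'(0) = 0: the velocity is unchanged,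
   and the acceleration changes only by lam''(0) psi(g), which vanishes on [0, L/2] and [3L/2, 2L].
   Admissibility persists for small t: speed and curvature depend continuously on t, and
   x |-> x + lam psi(x, y) stays injective while |lam| sup |d psi / dx| < 1. *)

From Stdlib Require Import Reals List Lia Lra FunctionalExtensionality Classical.
From Coquelicot Require Import Coquelicot.
Open Scope R_scope.

Lemma ball_between (x y : R) (e : posreal) : ball x e y -> x - e < y < x + e.
Proof.
  intros H. unfold ball in H; simpl in H; unfold AbsRing_ball, abs, minus, plus, opp in H; simpl in H.
  apply Rabs_lt_between in H. lra.
Qed.

Lemma locally_interval (a b x : R) : a < x < b -> locally x (fun y => a < y < b).
Proof.
  intros Hx. assert (Hd : 0 < Rmin (x - a) (b - x)) by (apply Rmin_glb_lt; lra).
  exists (mkposreal _ Hd). intros y Hy. apply ball_between in Hy. simpl in Hy.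
  pose proof (Rmin_l (x - a) (b - x)). pose proof (Rmin_r (x - a) (b - x)). lra.
Qed.

Lemma Derive_ext_interior (f h : R -> R) (a b x : R) :
  (forall s, a < s < b -> f s = h s) -> a < x < b -> Derive f x = Derive h x.
Proof.
  intros H Hx. apply Derive_ext_loc. eapply filter_imp; [|exact (locally_interval a b x Hx)]. auto.
Qed.

Lemma Derive_locally_const (f : R -> R) (c x d : R) :
  0 < d -> (forall t, x - d < t < x + d -> f t = c) -> Derive f x = 0.
Proof.
  intros Hd H. rewrite (Derive_ext_interior f (fun _ => c) (x - d) (x + d)); auto.
  - apply Derive_const.
  - lra.
Qed.

(** * Smooth functions of one and two variables *)

Lemma smooth1_ex_derive_n (f : R -> R) (k : nat) (x : R) :
  smooth1 f -> ex_derive (Derive_n f k) x.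
Proof. intros H. exact (H (S k) x). Qed.

Lemma smooth1_ex_derive (f : R -> R) (x : R) : smooth1 f -> ex_derive f x.
Proof. intros H. exact (smooth1_ex_derive_n f 0 x H). Qed.

Lemma Derive_n_Derive (f : R -> R) (k : nat) : Derive_n (Derive f) k = Derive_n f (S k).
Proof.
  apply functional_extensionality; intro x.
  rewrite <- Nat.add_1_r, <- Derive_n_comp. reflexivity.
Qed.

Lemma smooth1_Derive (f : R -> R) : smooth1 f -> smooth1 (Derive f).
Proof.
  intros H [|k] x; [exact I|]. simpl. rewrite Derive_n_Derive. apply smooth1_ex_derive_n, H.
Qed.

Lemma smooth1_continuous (f : R -> R) (x : R) : smooth1 f -> continuous f x.
Proof. intros H. apply (@ex_derive_continuous R_AbsRing R_NormedModule), smooth1_ex_derive, H. Qed.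

Lemma smooth1_continuity_pt (f : R -> R) (x : R) : smooth1 f -> continuity_pt f x.
Proof. intros H. apply continuity_pt_filterlim, smooth1_continuous, H. Qed.

Lemma smooth1_ex_RInt (f : R -> R) (a b : R) : smooth1 f -> ex_RInt f a b.
Proof. intros H. apply (@ex_RInt_continuous R_CompleteNormedModule). intros x _. now apply smooth1_continuous. Qed.

Definition smooth_on (P : R -> Prop) (h : R -> R) : Prop :=
  forall k x, P x -> ex_derive (Derive_n h k) x.

Lemma smooth_on_Derive (P : R -> Prop) (h : R -> R) : smooth_on P h -> smooth_on P (Derive h).
Proof. intros H k x Hx. rewrite Derive_n_Derive. exact (H (S k) x Hx). Qed.

Lemma smooth1_smooth_on (P : R -> Prop) (h : R -> R) : smooth1 h -> smooth_on P h.
Proof. intros H k x _. now apply smooth1_ex_derive_n. Qed.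

Lemma is_derive_div_pow (c x : R) (n : nat) :
  0 < x -> is_derive (fun y => c / y ^ S n) x (- c * INR (S n) / x ^ S (S n)).
Proof.
  intros Hx. assert (x ^ n <> 0) by (apply pow_nonzero; lra).
  auto_derive; [apply Rmult_integral_contrapositive; lra|].
  change (match n with 0%nat => 1 | S _ => INR n + 1 end) with (INR (S n)). simpl. field. lra.
Qed.

Lemma Derive_n_Rinv_pos (n : nat) : exists c, forall x, 0 < x -> Derive_n Rinv n x = c / x ^ S n.
Proof.
  induction n as [|n [c Hc]].
  - exists 1. intros x Hx. simpl. field. lra.
  - exists (- c * INR (S n)). intros x Hx. simpl Derive_n.
    rewrite (Derive_ext_loc _ (fun y => c / y ^ S n)).
    + apply is_derive_unique, is_derive_div_pow, Hx.
    + eapply filter_imp; [|exact (locally_interval 0 (x + 1) x ltac:(lra))].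
      intros y Hy. apply Hc. lra.
Qed.

Lemma smooth_on_Rinv : smooth_on (fun x => 0 < x) Rinv.
Proof.
  intros k x Hx. destruct (Derive_n_Rinv_pos k) as [c Hc].
  apply (ex_derive_ext_loc (fun y => c / y ^ S k)).
  - eapply filter_imp; [|exact (locally_interval 0 (x + 1) x ltac:(lra))].
    intros y Hy. symmetry. apply Hc. lra.
  - eexists. apply is_derive_div_pow, Hx.
Qed.

Definition partially_diff (F : R -> R -> R) : Prop :=
  forall s t, continuity_2d_pt F s t /\
    ex_derive (fun u => F u t) s /\ ex_derive (fun u => F s u) t.

Definition smooth2_upto (n : nat) (F : R -> R -> R) : Prop :=
  forall ds, (length ds <= n)%nat -> partially_diff (iter_pd ds F).

Lemma iter_pd_app (ds ds' : list bool) (F : R -> R -> R) :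
  iter_pd (ds ++ ds') F = iter_pd ds (iter_pd ds' F).
Proof. unfold iter_pd. now rewrite fold_right_app. Qed.

Lemma smooth2_upto_all (F : R -> R -> R) : smooth2 F <-> forall n, smooth2_upto n F.
Proof.
  split.
  - intros H n ds _ s t. apply H.
  - intros H ds s t. exact (H (length ds) ds (le_n _) s t).
Qed.

Lemma smooth2_upto_0 (F : R -> R -> R) : smooth2_upto 0 F <-> partially_diff F.
Proof.
  split.
  - intros H. apply (H nil). simpl; lia.
  - intros H [|b ds] Hl; [exact H | simpl in Hl; lia].
Qed.

Lemma smooth2_upto_S (n : nat) (F : R -> R -> R) :
  smooth2_upto (S n) F <-> partially_diff F /\ forall b, smooth2_upto n (pd b F).
Proof.
  split.
  - intros H. split.
    + apply (H nil). simpl; lia.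
    + intros b ds Hl. change (pd b F) with (iter_pd (b :: nil) F).
      rewrite <- iter_pd_app. apply H. rewrite length_app. simpl. lia.
  - intros [H0 H] ds Hl. destruct (list_eq_dec Bool.bool_dec ds nil) as [->|Hne].
    + exact H0.
    + destruct (exists_last Hne) as [ds' [b ->]].
      rewrite iter_pd_app. apply H. rewrite length_app in Hl. simpl in Hl. lia.
Qed.

Lemma smooth2_upto_le (m n : nat) (F : R -> R -> R) :
  (m <= n)%nat -> smooth2_upto n F -> smooth2_upto m F.
Proof. intros Hmn H ds Hl. apply H. lia. Qed.

Lemma smooth2_upto_partially_diff (n : nat) (F : R -> R -> R) :
  smooth2_upto n F -> partially_diff F.
Proof. intros H. apply smooth2_upto_0, (smooth2_upto_le 0 n); [lia | exact H]. Qed.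

Lemma smooth2_partially_diff (F : R -> R -> R) : smooth2 F -> partially_diff F.
Proof. intros H s t. apply (H nil). Qed.

Lemma smooth2_pd (b : bool) (F : R -> R -> R) : smooth2 F -> smooth2 (pd b F).
Proof.
  intros H ds s t. change (pd b F) with (iter_pd (b :: nil) F).
  rewrite <- iter_pd_app. apply H.
Qed.

Lemma smooth2_iter_pd (ds : list bool) (F : R -> R -> R) : smooth2 F -> smooth2 (iter_pd ds F).
Proof. intros H ds' s t. rewrite <- iter_pd_app. apply H. Qed.

Lemma smooth2_ext (F G : R -> R -> R) : (forall s t, F s t = G s t) -> smooth2 F -> smooth2 G.
Proof.
  intros E H. replace G with F; [exact H|].
  apply functional_extensionality; intro s. apply functional_extensionality; intro t. apply E.
Qed.

Lemma partially_diff_plus (F G : R -> R -> R) :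
  partially_diff F -> partially_diff G -> partially_diff (fun s t => F s t + G s t).
Proof.
  intros HF HG s t. destruct (HF s t) as [cF [dF eF]], (HG s t) as [cG [dG eG]].
  split; [|split].
  - now apply continuity_2d_pt_plus.
  - now apply (ex_derive_plus (fun u => F u t) (fun u => G u t)).
  - now apply (ex_derive_plus (fun u => F s u) (fun u => G s u)).
Qed.

Lemma partially_diff_mult (F G : R -> R -> R) :
  partially_diff F -> partially_diff G -> partially_diff (fun s t => F s t * G s t).
Proof.
  intros HF HG s t. destruct (HF s t) as [cF [dF eF]], (HG s t) as [cG [dG eG]].
  split; [|split].
  - now apply continuity_2d_pt_mult.
  - now apply (ex_derive_mult (fun u => F u t) (fun u => G u t)).
  - now apply (ex_derive_mult (fun u => F s u) (fun u => G s u)).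
Qed.

Lemma partially_diff_comp (h : R -> R) (F : R -> R -> R) :
  (forall s t, ex_derive h (F s t)) -> partially_diff F -> partially_diff (fun s t => h (F s t)).
Proof.
  intros Hh HF s t. destruct (HF s t) as [cF [dF eF]]. split; [|split].
  - apply continuity_1d_2d_pt_comp; auto.
    apply continuity_pt_filterlim, (@ex_derive_continuous R_AbsRing R_NormedModule), Hh.
  - now apply (ex_derive_comp h (fun u => F u t)).
  - now apply (ex_derive_comp h (fun u => F s u)).
Qed.

Lemma pd_plus (b : bool) (F G : R -> R -> R) : partially_diff F -> partially_diff G ->
  pd b (fun s t => F s t + G s t) = (fun s t => pd b F s t + pd b G s t).
Proof.
  intros HF HG. apply functional_extensionality; intro s. apply functional_extensionality; intro t.
  destruct (HF s t) as [_ [dF eF]], (HG s t) as [_ [dG eG]]. destruct b; simpl.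
  - now rewrite (Derive_plus (fun u => F u t) (fun u => G u t)).
  - now rewrite (Derive_plus (fun u => F s u) (fun u => G s u)).
Qed.

Lemma pd_mult (b : bool) (F G : R -> R -> R) : partially_diff F -> partially_diff G ->
  pd b (fun s t => F s t * G s t) = (fun s t => pd b F s t * G s t + F s t * pd b G s t).
Proof.
  intros HF HG. apply functional_extensionality; intro s. apply functional_extensionality; intro t.
  destruct (HF s t) as [_ [dF eF]], (HG s t) as [_ [dG eG]]. destruct b; simpl.
  - now rewrite (Derive_mult (fun u => F u t) (fun u => G u t)).
  - now rewrite (Derive_mult (fun u => F s u) (fun u => G s u)).
Qed.

Lemma pd_comp (b : bool) (h : R -> R) (F : R -> R -> R) :
  (forall s t, ex_derive h (F s t)) -> partially_diff F ->
  pd b (fun s t => h (F s t)) = (fun s t => Derive h (F s t) * pd b F s t).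
Proof.
  intros Hh HF. apply functional_extensionality; intro s. apply functional_extensionality; intro t.
  destruct (HF s t) as [_ [dF eF]]. destruct b; simpl.
  - rewrite (Derive_comp h (fun u => F u t)); auto. ring.
  - rewrite (Derive_comp h (fun u => F s u)); auto. ring.
Qed.

Lemma smooth2_upto_plus (n : nat) (F G : R -> R -> R) :
  smooth2_upto n F -> smooth2_upto n G -> smooth2_upto n (fun s t => F s t + G s t).
Proof.
  revert F G; induction n as [|n IH]; intros F G HF HG.
  - apply smooth2_upto_0. apply smooth2_upto_0 in HF, HG. now apply partially_diff_plus.
  - apply smooth2_upto_S in HF as [HF0 HF], HG as [HG0 HG]. apply smooth2_upto_S. split.
    + now apply partially_diff_plus.
    + intros b. rewrite pd_plus by auto. auto.
Qed.

Lemma smooth2_upto_mult (n : nat) (F G : R -> R -> R) :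
  smooth2_upto n F -> smooth2_upto n G -> smooth2_upto n (fun s t => F s t * G s t).
Proof.
  revert F G; induction n as [|n IH]; intros F G HF HG.
  - apply smooth2_upto_0. apply smooth2_upto_0 in HF, HG. now apply partially_diff_mult.
  - assert (HF' := smooth2_upto_le n (S n) F ltac:(lia) HF).
    assert (HG' := smooth2_upto_le n (S n) G ltac:(lia) HG).
    apply smooth2_upto_S in HF as [HF0 HF], HG as [HG0 HG]. apply smooth2_upto_S. split.
    + now apply partially_diff_mult.
    + intros b. rewrite pd_mult by auto. apply smooth2_upto_plus; auto.
Qed.

Lemma smooth2_upto_comp (n : nat) (P : R -> Prop) (h : R -> R) (F : R -> R -> R) :
  smooth_on P h -> (forall s t, P (F s t)) -> smooth2_upto n F ->
  smooth2_upto n (fun s t => h (F s t)).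
Proof.
  revert h; induction n as [|n IH]; intros h Hh HP HF.
  all: assert (Hh0 : forall s t, ex_derive h (F s t)) by (intros s t; exact (Hh 0%nat _ (HP s t))).
  - apply smooth2_upto_0. apply smooth2_upto_0 in HF. now apply partially_diff_comp.
  - assert (HF' := smooth2_upto_le n (S n) F ltac:(lia) HF).
    apply smooth2_upto_S in HF as [HF0 HF]. apply smooth2_upto_S. split.
    + now apply partially_diff_comp.
    + intros b. rewrite pd_comp by auto.
      apply smooth2_upto_mult; auto. apply IH; auto. now apply smooth_on_Derive.
Qed.

Lemma pd_const (b : bool) (c : R) : pd b (fun _ _ => c) = (fun _ _ => 0).
Proof.
  apply functional_extensionality; intro s. apply functional_extensionality; intro t.
  destruct b; simpl; apply Derive_const.
Qed.

Lemma smooth2_upto_const (n : nat) (c : R) : smooth2_upto n (fun _ _ => c).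
Proof.
  revert c; induction n as [|n IH]; intros c.
  - apply smooth2_upto_0. intros s t. split; [|split].
    + apply continuity_2d_pt_const.
    + apply ex_derive_const.
    + apply ex_derive_const.
  - apply smooth2_upto_S. split.
    + apply (smooth2_upto_partially_diff n), IH.
    + intros b. rewrite pd_const. apply IH.
Qed.

Definition coord (b : bool) : R -> R -> R := fun s t => if b then s else t.

Lemma pd_coord (b b' : bool) : pd b' (coord b) = (fun _ _ => if Bool.eqb b b' then 1 else 0).
Proof.
  apply functional_extensionality; intro s. apply functional_extensionality; intro t.
  destruct b, b'; unfold coord, pd; simpl; auto using Derive_id, Derive_const.
Qed.

Lemma smooth2_upto_coord (n : nat) (b : bool) : smooth2_upto n (coord b).
Proof.
  destruct n as [|n]; [apply smooth2_upto_0 | apply smooth2_upto_S; split].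
  3: intros b'; rewrite pd_coord; apply smooth2_upto_const.
  all: intros s t; destruct b; unfold coord; repeat split;
    auto using continuity_2d_pt_id1, continuity_2d_pt_id2, ex_derive_const, ex_derive_id.
Qed.

Lemma smooth2_plus (F G : R -> R -> R) : smooth2 F -> smooth2 G -> smooth2 (fun s t => F s t + G s t).
Proof. rewrite !smooth2_upto_all. intros HF HG n. now apply smooth2_upto_plus. Qed.

Lemma smooth2_mult (F G : R -> R -> R) : smooth2 F -> smooth2 G -> smooth2 (fun s t => F s t * G s t).
Proof. rewrite !smooth2_upto_all. intros HF HG n. now apply smooth2_upto_mult. Qed.

Lemma smooth2_comp_on (P : R -> Prop) (h : R -> R) (F : R -> R -> R) :
  smooth_on P h -> (forall s t, P (F s t)) -> smooth2 F -> smooth2 (fun s t => h (F s t)).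
Proof. rewrite !smooth2_upto_all. intros Hh HP HF n. now apply (smooth2_upto_comp n P). Qed.

Lemma smooth2_comp (h : R -> R) (F : R -> R -> R) :
  smooth1 h -> smooth2 F -> smooth2 (fun s t => h (F s t)).
Proof. intros Hh. apply (smooth2_comp_on (fun _ => True)); auto using smooth1_smooth_on. Qed.

Lemma smooth2_const (c : R) : smooth2 (fun _ _ => c).
Proof. apply smooth2_upto_all. intros n. apply smooth2_upto_const. Qed.

Lemma smooth2_coord (b : bool) : smooth2 (coord b).
Proof. apply smooth2_upto_all. intros n. apply smooth2_upto_coord. Qed.

Lemma smooth2_of_t (f : R -> R) : smooth1 f -> smooth2 (fun _ t => f t).
Proof. intros Hf. exact (smooth2_comp f (coord false) Hf (smooth2_coord false)). Qed.

Lemma smooth2_scal (c : R) (F : R -> R -> R) : smooth2 F -> smooth2 (fun s t => c * F s t).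
Proof. intros H. apply smooth2_mult; auto using smooth2_const. Qed.

Lemma smooth2_minus (F G : R -> R -> R) : smooth2 F -> smooth2 G -> smooth2 (fun s t => F s t - G s t).
Proof.
  intros HF HG. apply (smooth2_ext (fun s t => F s t + (-1) * G s t)); [intros; ring|].
  apply smooth2_plus; auto using smooth2_scal.
Qed.

Lemma smooth2_sqr (F : R -> R -> R) : smooth2 F -> smooth2 (fun s t => F s t ^ 2).
Proof. intros H. apply (smooth2_ext (fun s t => F s t * F s t)); [intros; ring|]. now apply smooth2_mult. Qed.

Lemma Derive_n_slice_s (F : R -> R -> R) (t : R) (k : nat) :
  Derive_n (fun s => F s t) k = (fun s => iter_pd (repeat true k) F s t).
Proof.
  induction k as [|k IH]; [reflexivity|].
  apply functional_extensionality; intro s. simpl. now rewrite IH.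
Qed.

Lemma Derive_n_slice_t (F : R -> R -> R) (s : R) (k : nat) :
  Derive_n (fun t => F s t) k = (fun t => iter_pd (repeat false k) F s t).
Proof.
  induction k as [|k IH]; [reflexivity|].
  apply functional_extensionality; intro t. simpl. now rewrite IH.
Qed.

Lemma smooth2_slice_s (F : R -> R -> R) (t : R) : smooth2 F -> smooth1 (fun s => F s t).
Proof.
  intros H [|k] x; [exact I|]. simpl. rewrite Derive_n_slice_s. apply (H (repeat true k) x t).
Qed.

Lemma smooth2_slice_t (F : R -> R -> R) (s : R) : smooth2 F -> smooth1 (fun t => F s t).
Proof.
  intros H [|k] x; [exact I|]. simpl. rewrite Derive_n_slice_t. apply (H (repeat false k) s x).
Qed.

Lemma smooth1_of_smooth2 (f : R -> R) : smooth2 (fun _ t => f t) -> smooth1 f.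
Proof. apply (smooth2_slice_t (fun _ t => f t) 0). Qed.

Lemma smooth2_continuity_2d_pt (F : R -> R -> R) (s t : R) : smooth2 F -> continuity_2d_pt F s t.
Proof. intros H. apply (smooth2_partially_diff F H s t). Qed.

Lemma smooth2_ex_derive_s (F : R -> R -> R) (s t : R) : smooth2 F -> ex_derive (fun u => F u t) s.
Proof. intros H. apply (smooth2_partially_diff F H s t). Qed.

Lemma smooth2_ex_derive_t (F : R -> R -> R) (s t : R) : smooth2 F -> ex_derive (fun u => F s u) t.
Proof. intros H. apply (smooth2_partially_diff F H s t). Qed.

Lemma smooth2_ex_RInt (F : R -> R -> R) (a b t : R) : smooth2 F -> ex_RInt (fun s => F s t) a b.
Proof. intros H. apply smooth1_ex_RInt, smooth2_slice_s, H. Qed.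

Lemma pd_swap (F : R -> R -> R) (s t : R) :
  smooth2 F -> pd false (pd true F) s t = pd true (pd false F) s t.
Proof.
  intros H. symmetry. apply (Schwarz F s t).
  - exists (mkposreal 1 Rlt_0_1). intros u v _ _.
    repeat split; auto using smooth2_ex_derive_s, smooth2_ex_derive_t, smooth2_pd.
    + apply (smooth2_ex_derive_s (pd false F)), smooth2_pd, H.
    + apply (smooth2_ex_derive_t (pd true F)), smooth2_pd, H.
  - apply (smooth2_continuity_2d_pt (pd true (pd false F))). repeat apply smooth2_pd; auto.
  - apply (smooth2_continuity_2d_pt (pd false (pd true F))). repeat apply smooth2_pd; auto.
Qed.

Definition RInt_slice (F : R -> R -> R) (a b : R) : R -> R := fun t => RInt (fun s => F s t) a b.

Lemma is_derive_RInt_slice (F : R -> R -> R) (a b t : R) :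
  smooth2 F -> is_derive (RInt_slice F a b) t (RInt_slice (pd false F) a b t).
Proof.
  intros H. apply (is_derive_RInt_param (fun t s => F s t) a b t).
  - apply filter_forall. intros u s _. exact (smooth2_ex_derive_t F s u H).
  - intros s _ eps. destruct (smooth2_continuity_2d_pt (pd false F) s t (smooth2_pd false F H) eps)
      as [d Hd].
    exists d. intros u v Hu Hv. now apply Hd.
  - apply filter_forall. intros u. now apply smooth2_ex_RInt.
Qed.

Lemma Derive_RInt_slice (F : R -> R -> R) (a b t : R) :
  smooth2 F -> Derive (RInt_slice F a b) t = RInt_slice (pd false F) a b t.
Proof. intros H. apply is_derive_unique, is_derive_RInt_slice, H. Qed.

Lemma Derive_n_RInt_slice (k : nat) (F : R -> R -> R) (a b : R) :
  smooth2 F -> Derive_n (RInt_slice F a b) k = RInt_slice (iter_pd (repeat false k) F) a b.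
Proof.
  revert F; induction k as [|k IH]; intros F H; [reflexivity|].
  apply functional_extensionality; intro t. simpl. rewrite IH by auto.
  apply Derive_RInt_slice, smooth2_iter_pd, H.
Qed.

Lemma smooth1_RInt_slice (F : R -> R -> R) (a b : R) : smooth2 F -> smooth1 (RInt_slice F a b).
Proof.
  intros H [|k] t; [exact I|]. simpl. rewrite Derive_n_RInt_slice by auto.
  eexists. apply is_derive_RInt_slice, smooth2_iter_pd, H.
Qed.

Lemma continuity_pt_near (f : R -> R) (x e : R) :
  continuity_pt f x -> 0 < e -> exists d, 0 < d /\ forall t, Rabs (t - x) <= d -> Rabs (f t - f x) < e.
Proof.
  intros Hc He. rewrite continuity_pt_locally in Hc. destruct (Hc (mkposreal e He)) as [d Hd].
  exists (d / 2). split; [destruct d; simpl; lra|].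
  intros t Ht. apply Hd. unfold ball; simpl; unfold AbsRing_ball, abs, minus, plus, opp; simpl.
  destruct d; simpl in *. fold (t - x). lra.
Qed.

Lemma Rabs_mult_lt_1_near_0 (f : R -> R) (M : R) : continuity_pt f 0 -> f 0 = 0 ->
  exists d, 0 < d /\ forall t, Rabs t <= d -> Rabs (f t) * M < 1.
Proof.
  intros Hf Hf0. assert (HM0 : 0 <= Rabs M) by apply Rabs_pos.
  destruct (continuity_pt_near f 0 (/ (Rabs M + 1)) Hf ltac:(apply Rinv_0_lt_compat; lra))
    as [d [Hd Hsmall]].
  exists d. split; [exact Hd|]. intros t Ht.
  specialize (Hsmall t ltac:(now rewrite Rminus_0_r)). rewrite Hf0, Rminus_0_r in Hsmall.
  apply (Rle_lt_trans _ (Rabs (f t) * Rabs M)); [apply Rmult_le_compat_l; [apply Rabs_pos | apply RRle_abs]|].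
  apply (Rle_lt_trans _ (/ (Rabs M + 1) * Rabs M)); [apply Rmult_le_compat_r; lra|].
  apply (Rmult_lt_reg_l (Rabs M + 1)); [lra|]. field_simplify; lra.
Qed.

Lemma pos_on_strip (F : R -> R -> R) (a b : R) : a <= b ->
  (forall s, a <= s <= b -> continuity_2d_pt F s 0) -> (forall s, a <= s <= b -> 0 < F s 0) ->
  exists d, 0 < d /\ forall s t, a <= s <= b -> Rabs t <= d -> 0 < F s t.
Proof.
  intros Hab Hc Hp.
  destruct (continuity_ab_min (fun x => F x 0) a b Hab) as [mx [Hmx Hmxab]].
  { intros x Hx. apply continuity_pt_locally. intros eps. destruct (Hc x Hx eps) as [d Hd].
    exists d. intros y Hy. apply Hd; [exact Hy|]. rewrite Rminus_diag, Rabs_R0. apply cond_pos. }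
  assert (Hm : 0 < F mx 0) by (apply Hp; auto).
  destruct (uniform_continuity_2d_1d F a b 0 Hc (mkposreal (F mx 0 / 2) ltac:(lra))) as [d Hd].
  exists (d / 2). split; [destruct d; simpl; lra|].
  intros s t Hs Ht. apply Rabs_le_between in Ht.
  specialize (Hd s 0 s t Hs). simpl in Hd. rewrite Rminus_diag, Rabs_R0 in Hd.
  assert (Hlt := Hd ltac:(destruct d; simpl in *; lra) Hs ltac:(destruct d; simpl in *; lra) (cond_pos d)).
  apply Rabs_lt_between in Hlt. specialize (Hmx s Hs). simpl in Hmx. lra.
Qed.

Lemma RInt_gt_0_at (f : R -> R) (a b c : R) : a < c < b -> (forall x, continuous f x) ->
  (forall x, a < x < b -> 0 <= f x) -> 0 < f c -> 0 < RInt f a b.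
Proof.
  intros Hc Hcont Hnn Hpos.
  assert (Hcp : continuity_pt f c) by (apply continuity_pt_filterlim; apply Hcont).
  destruct (continuity_pt_near f c (f c / 2) Hcp ltac:(lra)) as [e [He Hnear]].
  set (a' := Rmax a (c - e)). set (b' := Rmin b (c + e)).
  assert (Ha' : a <= a' < c) by (unfold a'; split; [apply Rmax_l | apply Rmax_lub_lt; lra]).
  assert (Hb' : c < b' <= b) by (unfold b'; split; [apply Rmin_glb_lt; lra | apply Rmin_l]).
  assert (Hex : forall u v, ex_RInt f u v)
    by (intros; apply (@ex_RInt_continuous R_CompleteNormedModule); auto).
  rewrite <- (RInt_Chasles f a a' b), <- (RInt_Chasles f a' b' b) by auto.
  assert (0 <= RInt f a a') by (apply RInt_ge_0; auto; [lra | intros; apply Hnn; lra]).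
  assert (0 <= RInt f b' b) by (apply RInt_ge_0; auto; [lra | intros; apply Hnn; lra]).
  assert (0 < RInt f a' b').
  { apply RInt_gt_0; [lra | | intros; auto]. intros x Hx.
    pose proof (Rmax_r a (c - e)). pose proof (Rmin_r b (c + e)).
    assert (Hxe : Rabs (x - c) <= e) by (apply Rabs_le_between; unfold a', b' in Hx; lra).
    specialize (Hnear x Hxe). apply Rabs_lt_between in Hnear. lra. }
  unfold plus; simpl. lra.
Qed.

Lemma pair_eq (p q : R * R) : fst p = fst q -> snd p = snd q -> p = q.
Proof. destruct p, q; simpl; intros -> ->; reflexivity. Qed.

(** * The flat function exp (-1/x) *)

Inductive poly_expr := PConst (c : R) | PVar | PAdd (p q : poly_expr) | PMul (p q : poly_expr).

Fixpoint peval (p : poly_expr) (u : R) : R :=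
  match p with
  | PConst c => c | PVar => u
  | PAdd p q => peval p u + peval q u | PMul p q => peval p u * peval q u
  end.

Fixpoint pderiv (p : poly_expr) : poly_expr :=
  match p with
  | PConst _ => PConst 0 | PVar => PConst 1
  | PAdd p q => PAdd (pderiv p) (pderiv q)
  | PMul p q => PAdd (PMul (pderiv p) q) (PMul p (pderiv q))
  end.

Lemma is_derive_peval (p : poly_expr) (u : R) : is_derive (peval p) u (peval (pderiv p) u).
Proof.
  revert u; induction p as [c| |p IHp q IHq|p IHp q IHq]; intros u; simpl.
  - apply (is_derive_const c u).
  - apply (is_derive_id u).
  - now apply (is_derive_plus (peval p) (peval q)).
  - apply (is_derive_mult (peval p) (peval q)); auto. intros; apply Rmult_comm.
Qed.

Lemma peval_growth (p : poly_expr) :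
  exists C k, 0 <= C /\ forall u, 0 <= u -> Rabs (peval p u) <= C * (1 + u) ^ k.
Proof.
  induction p as [c| |p [C1 [k1 [H1 B1]]] q [C2 [k2 [H2 B2]]]|p [C1 [k1 [H1 B1]]] q [C2 [k2 [H2 B2]]]].
  - exists (Rabs c), 0%nat. split; [apply Rabs_pos|]. intros; simpl; lra.
  - exists 1, 1%nat. split; [lra|]. intros u Hu; simpl. rewrite Rabs_pos_eq; lra.
  - exists (C1 + C2), (Nat.max k1 k2). split; [lra|]. intros u Hu. simpl.
    eapply Rle_trans; [apply Rabs_triang|].
    assert ((1 + u) ^ k1 <= (1 + u) ^ Nat.max k1 k2) by (apply Rle_pow; [lra|lia]).
    assert ((1 + u) ^ k2 <= (1 + u) ^ Nat.max k1 k2) by (apply Rle_pow; [lra|lia]).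
    specialize (B1 u Hu). specialize (B2 u Hu). nra.
  - exists (C1 * C2), (k1 + k2)%nat. split; [now apply Rmult_le_pos|]. intros u Hu. simpl.
    rewrite Rabs_mult, pow_add.
    replace (C1 * C2 * ((1 + u) ^ k1 * (1 + u) ^ k2))
      with ((C1 * (1 + u) ^ k1) * (C2 * (1 + u) ^ k2)) by ring.
    apply Rmult_le_compat; auto using Rabs_pos.
Qed.

Lemma exp_pow_INR (n : nat) (x : R) : exp x ^ n = exp (INR n * x).
Proof.
  induction n as [|n IH]; [simpl; now rewrite Rmult_0_l, exp_0|].
  rewrite S_INR. simpl pow. rewrite IH, <- exp_plus. f_equal. ring.
Qed.

(* From [1 + u/m <= exp (u/m)], raised to the power [m]. *)
Lemma pow_le_exp (m : nat) (u : R) : (1 <= m)%nat -> 0 <= u -> (1 + u) ^ m <= INR m ^ m * exp u.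
Proof.
  intros Hm Hu. assert (Hm' : 1 <= INR m) by (apply (le_INR 1); lia).
  assert (E : exp u = exp (u / INR m) ^ m).
  { rewrite exp_pow_INR. f_equal. field. lra. }
  rewrite E, <- Rpow_mult_distr. apply pow_incr. split; [lra|].
  pose proof (exp_ineq1_le (u / INR m)).
  replace (1 + u) with (INR m * (1 + u / INR m) - (INR m - 1)) by (field; lra). nra.
Qed.

Lemma peval_exp_decay (p : poly_expr) :
  exists K, 0 <= K /\ forall u, 0 < u -> u * Rabs (peval p u) * exp (- u) <= K / u.
Proof.
  destruct (peval_growth p) as [C [k [HC Hb]]].
  set (m := S (S k)). exists (C * INR m ^ m).
  split; [apply Rmult_le_pos; [lra | apply pow_le, pos_INR]|]. intros u Hu.
  assert (Hexp : exp (- u) * exp u = 1) by (rewrite <- exp_plus; replace (- u + u) with 0 by ring; apply exp_0).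
  assert (He : 0 < exp (- u)) by apply exp_pos.
  assert (Hp : 0 <= (1 + u) ^ k) by (apply pow_le; lra).
  assert (Hm : (1 + u) ^ m <= INR m ^ m * exp u) by (apply pow_le_exp; [unfold m; lia | lra]).
  assert (Hk : u * Rabs (peval p u) <= u * (C * (1 + u) ^ k)) by (apply Rmult_le_compat_l; [lra | apply Hb; lra]).
  assert (Hu2 : u * u * (C * (1 + u) ^ k) <= C * (1 + u) ^ m).
  { unfold m. simpl. assert (0 <= C * (1 + u) ^ k) by (apply Rmult_le_pos; lra). nra. }
  apply (Rmult_le_reg_r u); [exact Hu|].
  replace (C * INR m ^ m / u * u) with (C * INR m ^ m * (exp (- u) * exp u)) by (rewrite Hexp; field; lra).
  assert (H1 : u * Rabs (peval p u) * u <= C * (1 + u) ^ m) by nra.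
  assert (H2 : C * (1 + u) ^ m <= C * INR m ^ m * exp u) by (rewrite Rmult_assoc; apply Rmult_le_compat_l; lra).
  nra.
Qed.

Definition flat_exp_poly (p : poly_expr) (x : R) : R :=
  if Rlt_dec 0 x then peval p (/ x) * exp (- / x) else 0.

(* [(p(1/x) e^(-1/x))' = (1/x)^2 (p - p')(1/x) e^(-1/x)] *)
Definition flat_exp_deriv (p : poly_expr) : poly_expr :=
  PMul (PMul PVar PVar) (PAdd p (PMul (PConst (-1)) (pderiv p))).

Lemma flat_exp_poly_nonpos (p : poly_expr) (x : R) : x <= 0 -> flat_exp_poly p x = 0.
Proof. intros Hx. unfold flat_exp_poly. destruct (Rlt_dec 0 x); [lra | reflexivity]. Qed.

Lemma is_derive_flat_exp_poly_pos (p : poly_expr) (x : R) :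
  0 < x -> is_derive (flat_exp_poly p) x (flat_exp_poly (flat_exp_deriv p) x).
Proof.
  intros Hx. apply (is_derive_ext_loc (fun y => peval p (/ y) * exp (- / y))).
  - eapply filter_imp; [|exact (locally_interval 0 (x + 1) x ltac:(lra))].
    intros y Hy. unfold flat_exp_poly. destruct (Rlt_dec 0 y); [reflexivity | lra].
  - assert (Hi : is_derive Rinv x (- / x ^ 2)).
    { apply (is_derive_ext (fun y => / y)); [reflexivity|]. auto_derive; [lra | field; lra]. }
    pose proof (is_derive_comp (peval p) Rinv x _ _ (is_derive_peval p (/ x)) Hi) as H1.
    assert (H2 : is_derive (fun y => exp (- / y)) x (exp (- / x) * / x ^ 2))
      by (auto_derive; [lra | field; lra]).
    pose proof (is_derive_mult _ _ x _ _ H1 H2 (fun a b => Rmult_comm a b)) as HD.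
    replace (flat_exp_poly (flat_exp_deriv p) x)
      with (plus (mult (scal (- / x ^ 2) (peval (pderiv p) (/ x))) (exp (- / x)))
                 (mult (peval p (/ x)) (exp (- / x) * / x ^ 2))); [exact HD|].
    unfold flat_exp_poly. destruct (Rlt_dec 0 x); [|lra]. simpl.
    unfold scal, mult, plus; simpl. unfold mult; simpl. field. lra.
Qed.

Lemma is_derive_flat_exp_poly_neg (p : poly_expr) (x : R) :
  x < 0 -> is_derive (flat_exp_poly p) x (flat_exp_poly (flat_exp_deriv p) x).
Proof.
  intros Hx. rewrite flat_exp_poly_nonpos by lra.
  apply (is_derive_ext_loc (fun _ => 0)); [|apply (is_derive_const 0 x)].
  eapply filter_imp; [|exact (locally_interval (x - 1) 0 x ltac:(lra))].
  intros y Hy. symmetry. apply flat_exp_poly_nonpos. lra.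
Qed.

Lemma is_derive_flat_exp_poly_0 (p : poly_expr) :
  is_derive (flat_exp_poly p) 0 (flat_exp_poly (flat_exp_deriv p) 0).
Proof.
  rewrite flat_exp_poly_nonpos by lra. apply is_derive_Reals. intros eps Heps.
  destruct (peval_exp_decay p) as [K [HK Hdecay]].
  assert (Hd : 0 < eps / (K + 1)) by (apply Rdiv_lt_0_compat; lra).
  exists (mkposreal _ Hd). intros h Hh0 Hh. simpl in Hh. rewrite Rplus_0_l.
  rewrite (flat_exp_poly_nonpos p 0) by lra.
  unfold flat_exp_poly. destruct (Rlt_dec 0 h) as [Hp|Hn].
  - rewrite Rabs_pos_eq in Hh by lra.
    specialize (Hdecay (/ h) (Rinv_0_lt_compat h Hp)). unfold Rdiv in Hdecay. rewrite Rinv_inv in Hdecay.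
    replace ((peval p (/ h) * exp (- / h) - 0) / h - 0) with (/ h * peval p (/ h) * exp (- / h))
      by (field; lra).
    rewrite !Rabs_mult, (Rabs_pos_eq (/ h)), (Rabs_pos_eq (exp _))
      by (apply Rlt_le; auto using exp_pos, Rinv_0_lt_compat).
    apply (Rle_lt_trans _ (K * h)); [exact Hdecay|].
    apply (Rmult_lt_compat_r (K + 1)) in Hh; [|lra].
    replace (eps / (K + 1) * (K + 1)) with eps in Hh by (field; lra). nra.
  - replace ((0 - 0) / h - 0) with 0 by (field; auto). rewrite Rabs_R0. lra.
Qed.

Lemma is_derive_flat_exp_poly (p : poly_expr) (x : R) :
  is_derive (flat_exp_poly p) x (flat_exp_poly (flat_exp_deriv p) x).
Proof.
  destruct (Rtotal_order x 0) as [H|[->|H]].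
  - now apply is_derive_flat_exp_poly_neg.
  - apply is_derive_flat_exp_poly_0.
  - now apply is_derive_flat_exp_poly_pos.
Qed.

Definition flat_exp : R -> R := flat_exp_poly (PConst 1).

Lemma Derive_n_flat_exp (n : nat) :
  Derive_n flat_exp n = flat_exp_poly (Nat.iter n flat_exp_deriv (PConst 1)).
Proof.
  induction n as [|n IH]; [reflexivity|].
  apply functional_extensionality; intro x. simpl. rewrite IH.
  apply is_derive_unique, is_derive_flat_exp_poly.
Qed.

Lemma smooth1_flat_exp : smooth1 flat_exp.
Proof.
  intros [|k] x; [exact I|]. simpl. rewrite Derive_n_flat_exp.
  eexists. apply is_derive_flat_exp_poly.
Qed.

Lemma flat_exp_pos (x : R) : 0 < x -> 0 < flat_exp x.
Proof.
  intros Hx. unfold flat_exp, flat_exp_poly. destruct (Rlt_dec 0 x); [|lra].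
  simpl. rewrite Rmult_1_l. apply exp_pos.
Qed.

Lemma flat_exp_nonpos (x : R) : x <= 0 -> flat_exp x = 0.
Proof. apply flat_exp_poly_nonpos. Qed.

Lemma flat_exp_ge0 (x : R) : 0 <= flat_exp x.
Proof.
  destruct (Rle_lt_dec x 0); [rewrite flat_exp_nonpos; lra | apply Rlt_le, flat_exp_pos; auto].
Qed.

Lemma Derive_flat_exp_nonpos (x : R) : x <= 0 -> Derive flat_exp x = 0.
Proof.
  intros Hx. change (Derive flat_exp x) with (Derive_n flat_exp 1 x).
  rewrite Derive_n_flat_exp. apply flat_exp_poly_nonpos, Hx.
Qed.

Definition bump (a b r x y : R) : R := flat_exp (r - ((x - a) ^ 2 + (y - b) ^ 2)).

Lemma smooth2_bump (a b r : R) (V1 V2 : R -> R -> R) :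
  smooth2 V1 -> smooth2 V2 -> smooth2 (fun s t => bump a b r (V1 s t) (V2 s t)).
Proof.
  intros H1 H2. unfold bump. apply smooth2_comp; [exact smooth1_flat_exp|].
  apply smooth2_minus; [apply smooth2_const|].
  apply smooth2_plus; apply smooth2_sqr, smooth2_minus; auto using smooth2_const.
Qed.

Lemma bump_outside (a b r x y : R) : r <= (x - a) ^ 2 + (y - b) ^ 2 -> bump a b r x y = 0.
Proof. intros H. apply flat_exp_nonpos. lra. Qed.

Lemma is_derive_bump_x (a b r x y : R) :
  is_derive (fun x => bump a b r x y) x
    (Derive flat_exp (r - ((x - a) ^ 2 + (y - b) ^ 2)) * (- (2 * (x - a)))).
Proof.
  assert (Hi : is_derive (fun x => r - ((x - a) ^ 2 + (y - b) ^ 2)) x (- (2 * (x - a))))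
    by (auto_derive; [auto | ring]).
  pose proof (is_derive_comp flat_exp _ x _ _
    (Derive_correct _ _ (smooth1_ex_derive _ _ smooth1_flat_exp)) Hi) as H.
  unfold bump. match goal with |- is_derive _ _ (?A * ?B) => replace (A * B) with (scal B A) end.
  - exact H.
  - unfold scal; simpl; unfold mult; simpl. ring.
Qed.

Lemma bump_x_derivative_bounded (a b r : R) : 0 < r ->
  exists M, 0 <= M /\ forall x y, exists d, is_derive (fun x => bump a b r x y) x d /\ Rabs d <= M.
Proof.
  intros Hr.
  destruct (continuity_ab_maj (fun u => Rabs (Derive flat_exp u)) 0 r ltac:(lra)) as [um [Hmax _]].
  { intros u _. apply (continuity_pt_comp (Derive flat_exp) Rabs); [|apply Rcontinuity_abs].
    apply smooth1_continuity_pt, smooth1_Derive, smooth1_flat_exp. }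
  set (ME := Rabs (Derive flat_exp um)).
  assert (HME : 0 <= ME) by apply Rabs_pos.
  exists (ME * (1 + r)). split; [apply Rmult_le_pos; lra|].
  intros x y. eexists. split; [apply is_derive_bump_x|].
  set (u := r - ((x - a) ^ 2 + (y - b) ^ 2)).
  assert (0 <= (x - a) ^ 2) by apply pow2_ge_0. assert (0 <= (y - b) ^ 2) by apply pow2_ge_0.
  destruct (Rle_lt_dec u 0) as [Hu|Hu].
  - rewrite Derive_flat_exp_nonpos by auto. rewrite Rmult_0_l, Rabs_R0. apply Rmult_le_pos; lra.
  - rewrite Rabs_mult. apply Rmult_le_compat; try apply Rabs_pos.
    + apply Hmax. unfold u in *. lra.
    + rewrite Rabs_Ropp, Rabs_mult, Rabs_pos_eq by lra.
      assert (Rabs (x - a) ^ 2 = (x - a) ^ 2) by (rewrite RPow_abs; apply Rabs_pos_eq, pow2_ge_0).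
      assert (0 <= (Rabs (x - a) - 1) ^ 2) by apply pow2_ge_0. unfold u in Hu. nra.
Qed.

Lemma shear_injective (psi : R -> R -> R) (M lam y p q : R) :
  (forall x, exists d, is_derive (fun x => psi x y) x d /\ Rabs d <= M) -> Rabs lam * M < 1 ->
  p + lam * psi p y = q + lam * psi q y -> p = q.
Proof.
  intros Hd Hlam Heq. set (f := fun x => psi x y).
  assert (Hf : forall x, is_derive f x (Derive f x)).
  { intros x. destruct (Hd x) as [d [Hdx _]]. now rewrite (is_derive_unique f x d). }
  destruct (MVT_gen f q p (Derive f)) as [c [_ Hmvt]].
  { intros x _. apply Hf. }
  { intros x _. apply continuity_pt_filterlim, (@ex_derive_continuous R_AbsRing R_NormedModule).
    eexists. apply Hf. }
  destruct (Req_dec p q) as [|Hne]; [assumption|]. exfalso.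
  assert (Hc : Rabs (Derive f c) <= M).
  { destruct (Hd c) as [d [Hdc Hb]]. now rewrite (is_derive_unique f c d). }
  assert (E : (1 + lam * Derive f c) * (p - q) = 0).
  { change (psi p y - psi q y = Derive f c * (p - q)) in Hmvt.
    replace ((1 + lam * Derive f c) * (p - q)) with (p - q + lam * (Derive f c * (p - q))) by ring.
    rewrite <- Hmvt. lra. }
  apply Rmult_integral in E as [E|E]; [|lra].
  assert (Hb : Rabs (lam * Derive f c) <= Rabs lam * M)
    by (rewrite Rabs_mult; apply Rmult_le_compat_l; auto using Rabs_pos).
  replace (lam * Derive f c) with (- (1)) in Hb by lra. rewrite Rabs_Ropp, Rabs_R1 in Hb. lra.
Qed.

(** * Admissible curves *)

Lemma pow2_pos (x : R) : x <> 0 -> 0 < x ^ 2.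
Proof. intros Hx. rewrite <- Rsqr_pow2. now apply Rsqr_pos_lt. Qed.

Definition sqdist (g : R -> R * R) (s0 s : R) : R := (cx g s - cx g s0) ^ 2 + (cy g s - cy g s0) ^ 2.

Section AdmissibleCurve.

Variables (x0 L : R) (g : R -> R * R).
Hypothesis HL : 0 < L.
Hypothesis Hg : admissible x0 L g.

(* If [y' = 0] near [L], then [y'' (L) = 0] and the curvature vanishes at [L]. *)
Lemma exists_dy_nonzero : exists s0, L / 2 < s0 < 3 * L / 2 /\ Derive (cy g) s0 <> 0.
Proof.
  apply NNPP. intros Hno.
  assert (Hdy : forall s, L / 2 < s < 3 * L / 2 -> Derive (cy g) s = 0).
  { intros s Hs. apply NNPP. intros Hne. apply Hno. now exists s. }
  assert (Hddy : Derive_n (cy g) 2 L = 0).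
  { apply (Derive_locally_const _ 0 L (L / 2)); [lra|]. intros t Ht. apply Hdy. lra. }
  destruct Hg as [_ [_ [_ [Hcurv _]]]]. specialize (Hcurv L ltac:(lra)).
  unfold curvature, dot, perp, vel, acc in Hcurv. simpl fst in Hcurv. simpl snd in Hcurv.
  change (Derive (fun x => Derive (fun x0 => cy g x0) x) L) with (Derive_n (cy g) 2 L) in Hcurv.
  rewrite Hddy, (Hdy L ltac:(lra)) in Hcurv. unfold Rdiv in Hcurv.
  rewrite Rmult_0_r, Rmult_0_l, Rplus_0_l, Rmult_0_l in Hcurv. lra.
Qed.

Lemma continuity_pt_sqdist (s0 s : R) : continuity_pt (sqdist g s0) s.
Proof.
  destruct Hg as [Hx [Hy _]].
  assert (Hc : forall f, smooth1 f -> continuity_pt (fun s => (f s - f s0) ^ 2) s).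
  { intros f Hf. apply (continuity_pt_ext (fun s => (f s - f s0) * (f s - f s0))); [intros; ring|].
    assert (continuity_pt (fun s => f s - f s0) s).
    { apply continuity_pt_minus; [now apply smooth1_continuity_pt | apply continuity_pt_const; now intros ? ?]. }
    now apply continuity_pt_mult. }
  apply continuity_pt_plus; auto.
Qed.

Lemma sqdist_pos (s0 s : R) : 0 <= s0 <= 2 * L -> 0 <= s <= 2 * L -> s <> s0 -> 0 < sqdist g s0 s.
Proof.
  intros Hs0 Hs Hne. destruct Hg as [_ [_ [_ [_ [Hinj _]]]]]. unfold sqdist.
  assert (Hne' : cx g s - cx g s0 <> 0 \/ cy g s - cy g s0 <> 0).
  { apply NNPP. intros H. apply Hne, Hinj; auto. apply pair_eq; unfold cx, cy in *; lra. }
  assert (0 <= (cx g s - cx g s0) ^ 2) by apply pow2_ge_0.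
  assert (0 <= (cy g s - cy g s0) ^ 2) by apply pow2_ge_0.
  destruct Hne' as [Hn | Hn]; apply pow2_pos in Hn; lra.
Qed.

(* Compactness of the two arcs [0, s0 - eta] and [s0 + eta, 2L], plus injectivity. *)
Lemma sqdist_bounded_below (s0 eta : R) : 0 < eta -> 0 <= s0 - eta -> s0 + eta <= 2 * L ->
  exists r, 0 < r /\ forall s, 0 <= s <= 2 * L -> eta <= Rabs (s - s0) -> r <= sqdist g s0 s.
Proof.
  intros Heta H0 H2.
  destruct (continuity_ab_min (sqdist g s0) 0 (s0 - eta) H0 (fun s _ => continuity_pt_sqdist s0 s))
    as [p1 [Hp1 Hp1r]].
  destruct (continuity_ab_min (sqdist g s0) (s0 + eta) (2 * L) H2 (fun s _ => continuity_pt_sqdist s0 s))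
    as [p2 [Hp2 Hp2r]].
  assert (0 < sqdist g s0 p1) by (apply sqdist_pos; lra).
  assert (0 < sqdist g s0 p2) by (apply sqdist_pos; lra).
  exists (Rmin (sqdist g s0 p1) (sqdist g s0 p2)). split; [now apply Rmin_glb_lt|].
  intros s Hs Hd. destruct (Rle_lt_dec s s0).
  - rewrite Rabs_left1 in Hd by lra. eapply Rle_trans; [apply Rmin_l | apply Hp1; lra].
  - rewrite Rabs_right in Hd by lra. eapply Rle_trans; [apply Rmin_r | apply Hp2; lra].
Qed.

Lemma bump_site : exists s0 eta r,
  L / 2 < s0 - eta /\ s0 + eta < 3 * L / 2 /\ 0 < eta /\ 0 < r /\
  (forall s, Rabs (s - s0) < eta -> 0 < Derive (cy g) s0 * Derive (cy g) s) /\
  (forall s, 0 <= s <= 2 * L -> eta <= Rabs (s - s0) -> r <= sqdist g s0 s).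
Proof.
  destruct exists_dy_nonzero as [s0 [Hs0 Hdy]].
  set (c := Derive (cy g) s0).
  assert (Hcc : 0 < c * c) by (apply Rsqr_pos_lt; exact Hdy).
  assert (Hcont : continuity_pt (fun s => c * Derive (cy g) s) s0).
  { apply continuity_pt_scal, smooth1_continuity_pt, smooth1_Derive. destruct Hg as [_ [Hy _]]. exact Hy. }
  destruct (continuity_pt_near _ s0 (c * c / 2) Hcont ltac:(lra)) as [e [He Hnear]].
  set (eta := Rmin (e / 2) (Rmin ((s0 - L / 2) / 2) ((3 * L / 2 - s0) / 2))).
  assert (eta <= e / 2) by apply Rmin_l.
  assert (eta <= (s0 - L / 2) / 2) by (eapply Rle_trans; [apply Rmin_r | apply Rmin_l]).
  assert (eta <= (3 * L / 2 - s0) / 2) by (eapply Rle_trans; [apply Rmin_r | apply Rmin_r]).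
  assert (Heta : 0 < eta) by (apply Rmin_glb_lt; [lra | apply Rmin_glb_lt; lra]).
  destruct (sqdist_bounded_below s0 eta) as [r [Hr Hbelow]]; [lra | lra | lra|].
  exists s0, eta, r. repeat split; try lra; auto.
  intros s Hs. specialize (Hnear s ltac:(lra)). apply Rabs_lt_between in Hnear. fold c in Hnear |- *. lra.
Qed.

End AdmissibleCurve.

(** * The area functional *)

Definition area_density (V1 V2 : R -> R -> R) (s t : R) : R :=
  V1 s t * pd true V2 s t - pd true V1 s t * V2 s t.

Definition area_at (V1 V2 : R -> R -> R) (L t : R) : R :=
  / 2 * RInt_slice (area_density V1 V2) 0 (2 * L) t.

Lemma smooth2_area_density (V1 V2 : R -> R -> R) :
  smooth2 V1 -> smooth2 V2 -> smooth2 (area_density V1 V2).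
Proof. intros H1 H2. apply smooth2_minus; apply smooth2_mult; auto using smooth2_pd. Qed.

Lemma smooth1_area_at (V1 V2 : R -> R -> R) (L : R) :
  smooth2 V1 -> smooth2 V2 -> smooth1 (area_at V1 V2 L).
Proof.
  intros H1 H2. apply smooth1_of_smooth2, smooth2_scal, smooth2_of_t.
  apply smooth1_RInt_slice, smooth2_area_density; auto.
Qed.

Lemma area_ext_interval (L : R) (h g : R -> R * R) :
  0 < L -> (forall s, 0 <= s <= 2 * L -> h s = g s) -> area L h = area L g.
Proof.
  intros HL H. unfold area. f_equal. apply RInt_ext.
  rewrite Rmin_left, Rmax_right by lra. intros s Hs.
  assert (Hx : forall u, 0 < u < 2 * L -> cx h u = cx g u) by (intros; unfold cx; rewrite H; auto; lra).
  assert (Hy : forall u, 0 < u < 2 * L -> cy h u = cy g u) by (intros; unfold cy; rewrite H; auto; lra).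
  rewrite Hx, Hy, (Derive_ext_interior (cx h) (cx g) 0 (2 * L)),
    (Derive_ext_interior (cy h) (cy g) 0 (2 * L)) by auto.
  reflexivity.
Qed.

Lemma area_at_shift (V1 V2 w : R -> R -> R) (lam : R -> R) (L t : R) :
  smooth2 V1 -> smooth2 V2 -> smooth2 w ->
  area_at (fun s t => V1 s t + lam t * w s t) V2 L t = area_at V1 V2 L t + lam t * area_at w V2 L t.
Proof.
  intros H1 H2 Hw. unfold area_at, RInt_slice.
  assert (E : forall s, pd true (fun s t => V1 s t + lam t * w s t) s t = pd true V1 s t + lam t * pd true w s t).
  { intros s. simpl. rewrite Derive_plus, Derive_scal; auto using smooth2_ex_derive_s.
    apply ex_derive_scal, smooth2_ex_derive_s, Hw. }
  rewrite (RInt_ext _ (fun s => area_density V1 V2 s t + lam t * area_density w V2 s t))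
    by (intros s _; unfold area_density; rewrite E; simpl; ring).
  rewrite (RInt_plus (V := R_CompleteNormedModule)), (RInt_scal (V := R_CompleteNormedModule)).
  - unfold plus, scal, mult; cbn -[area_density RInt]. ring.
  - apply smooth2_ex_RInt, smooth2_area_density; auto.
  - apply smooth2_ex_RInt, smooth2_area_density; auto.
  - apply (ex_RInt_scal (V := R_CompleteNormedModule) (fun s => area_density w V2 s t)).
    apply smooth2_ex_RInt, smooth2_area_density; auto.
Qed.

Lemma pd_mult_sub (b : bool) (F G H K : R -> R -> R) (s t : R) :
  smooth2 F -> smooth2 G -> smooth2 H -> smooth2 K ->
  pd b (fun s t => F s t * G s t - H s t * K s t) s t =
  pd b F s t * G s t + F s t * pd b G s t - (pd b H s t * K s t + H s t * pd b K s t).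
Proof.
  intros HF HG HH HK. destruct b; simpl.
  - rewrite (Derive_minus (fun u => F u t * G u t) (fun u => H u t * K u t)),
      (Derive_mult (fun u => F u t) (fun u => G u t)), (Derive_mult (fun u => H u t) (fun u => K u t));
      auto using smooth2_ex_derive_s, ex_derive_mult.
  - rewrite (Derive_minus (fun u => F s u * G s u) (fun u => H s u * K s u)),
      (Derive_mult (fun u => F s u) (fun u => G s u)), (Derive_mult (fun u => H s u) (fun u => K s u));
      auto using smooth2_ex_derive_t, ex_derive_mult.
Qed.

Definition vx (V : R -> R -> R * R) : R -> R -> R := fun s t => fst (V s t).
Definition vy (V : R -> R -> R * R) : R -> R -> R := fun s t => snd (V s t).

Definition shift_x (V : R -> R -> R * R) (lam : R -> R) (w : R -> R -> R) : R -> R -> R * R :=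
  fun s t => (vx V s t + lam t * w s t, vy V s t).

Lemma area_curve_at (V : R -> R -> R * R) (L t : R) :
  area L (curve_at V t) = area_at (vx V) (vy V) L t.
Proof. reflexivity. Qed.

Lemma area_shift_x (V : R -> R -> R * R) (lam : R -> R) (w : R -> R -> R) (L t : R) :
  smooth2 (vx V) -> smooth2 (vy V) -> smooth2 w ->
  area L (curve_at (shift_x V lam w) t) = area_at (vx V) (vy V) L t + lam t * area_at w (vy V) L t.
Proof. intros H1 H2 Hw. exact (area_at_shift (vx V) (vy V) w lam L t H1 H2 Hw). Qed.

(* Differentiating the area density in [t] and exchanging the mixed partials yields twice the
   normal-velocity term plus an exact [s]-derivative. *)
Lemma pd_t_area_density (V1 V2 : R -> R -> R) (s t : R) : smooth2 V1 -> smooth2 V2 ->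
  pd false (area_density V1 V2) s t =
  2 * (pd false V1 s t * pd true V2 s t - pd true V1 s t * pd false V2 s t)
  + pd true (fun s t => V1 s t * pd false V2 s t - pd false V1 s t * V2 s t) s t.
Proof.
  intros H1 H2. unfold area_density.
  rewrite !pd_mult_sub by auto using smooth2_pd.
  rewrite (pd_swap V1 s t H1), (pd_swap V2 s t H2). ring.
Qed.

Lemma RInt_Derive_mult_vanishing (W Y : R -> R) (a b : R) :
  smooth1 W -> smooth1 Y -> W a = 0 -> W b = 0 ->
  RInt (fun s => Derive W s * Y s) a b = - RInt (fun s => W s * Derive Y s) a b.
Proof.
  intros HW HY Ha Hb.
  assert (HdWY : forall s, Derive (fun s => W s * Y s) s = Derive W s * Y s + W s * Derive Y s)
    by (intros s; apply Derive_mult; now apply smooth1_ex_derive).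
  assert (Hc : forall s, continuous (fun s => Derive W s * Y s) s /\ continuous (fun s => W s * Derive Y s) s).
  { intros s. split; apply (continuous_mult (K := R_AbsRing));
      auto using smooth1_continuous, smooth1_Derive. }
  assert (Hex : forall f, (forall s, continuous f s) -> ex_RInt f a b)
    by (intros f Hf; apply (@ex_RInt_continuous R_CompleteNormedModule); auto).
  assert (E : RInt (Derive (fun s => W s * Y s)) a b = W b * Y b - W a * Y a).
  { apply (RInt_Derive (fun s => W s * Y s)).
    - intros s _. apply ex_derive_mult; now apply smooth1_ex_derive.
    - intros s _. rewrite (functional_extensionality _ _ HdWY).
      apply (continuous_plus (K := R_AbsRing) (V := R_NormedModule)); apply Hc. }
  rewrite Ha, Hb, (RInt_ext _ _ _ _ (fun s _ => HdWY s)) in E.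
  rewrite (RInt_plus (V := R_CompleteNormedModule)) in E by (apply Hex; apply Hc).
  unfold plus in E; simpl in E. lra.
Qed.

Lemma RInt_mult_Derive_neq_0 (W Y : R -> R) (a b s0 c : R) :
  smooth1 W -> smooth1 Y -> a < s0 < b -> 0 < W s0 -> 0 < c * Derive Y s0 ->
  (forall s, a < s < b -> 0 <= c * (W s * Derive Y s)) ->
  RInt (fun s => W s * Derive Y s) a b <> 0.
Proof.
  intros HW HY Hs0 HW0 HY0 Hnn.
  assert (Hpos : 0 < RInt (fun s => c * (W s * Derive Y s)) a b).
  { apply (RInt_gt_0_at _ a b s0); auto.
    - intros x. apply (continuous_mult (K := R_AbsRing)); [apply continuous_const|].
      apply (continuous_mult (K := R_AbsRing)); auto using smooth1_continuous, smooth1_Derive.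
    - replace (c * (W s0 * Derive Y s0)) with (W s0 * (c * Derive Y s0)) by ring.
      now apply Rmult_lt_0_compat. }
  rewrite (RInt_scal (V := R_CompleteNormedModule)) in Hpos.
  - intros Hz. rewrite Hz in Hpos. unfold scal in Hpos; simpl in Hpos. unfold mult in Hpos; simpl in Hpos. lra.
  - apply (@ex_RInt_continuous R_CompleteNormedModule). intros x _.
    apply (continuous_mult (K := R_AbsRing)); auto using smooth1_continuous, smooth1_Derive.
Qed.

(* [lam = (A0 - A) B / (B^2 + rho)]: the cut-off [rho], zero near [0] and positive where [B]
   may vanish, keeps [lam] globally smooth. *)
Lemma area_correction (A B : R -> R) (A0 : R) :
  smooth1 A -> smooth1 B -> B 0 <> 0 -> A 0 = A0 -> Derive A 0 = 0 ->
  exists lam d, smooth1 lam /\ lam 0 = 0 /\ Derive lam 0 = 0 /\ 0 < d /\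
    forall t, Rabs t <= d -> A t + lam t * B t = A0.
Proof.
  intros HA HB HB0 HA0 HdA0.
  destruct (continuity_pt_near B 0 (Rabs (B 0)) (smooth1_continuity_pt B 0 HB) (Rabs_pos_lt _ HB0))
    as [d [Hd Hnear]].
  assert (HBnz : forall t, Rabs t <= d -> B t <> 0).
  { intros t Ht Hz. specialize (Hnear t ltac:(rewrite Rminus_0_r; exact Ht)).
    rewrite Hz, Rminus_0_l, Rabs_Ropp in Hnear. lra. }
  set (rho := fun t => flat_exp (t ^ 2 - d ^ 2)).
  assert (Hrho0 : forall t, Rabs t <= d -> rho t = 0).
  { intros t Ht. apply flat_exp_nonpos. rewrite <- (pow2_abs t). pose proof (Rabs_pos t). nra. }
  assert (Hden : forall t, 0 < B t * B t + rho t).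
  { intros t. assert (0 <= B t * B t) by apply Rle_0_sqr.
    destruct (Rle_lt_dec (Rabs t) d) as [Ht|Ht].
    - pose proof (pow2_pos _ (HBnz t Ht)). pose proof (flat_exp_ge0 (t ^ 2 - d ^ 2)). unfold rho. nra.
    - enough (0 < rho t) by lra. apply flat_exp_pos. rewrite <- (pow2_abs t). nra. }
  set (K := fun t => B t * / (B t * B t + rho t)).
  assert (HK : smooth1 K).
  { apply smooth1_of_smooth2, smooth2_mult; [now apply smooth2_of_t|].
    apply (smooth2_comp_on (fun x => 0 < x) Rinv (fun _ t => B t * B t + rho t) smooth_on_Rinv);
      [intros; apply Hden|].
    apply smooth2_plus; [apply smooth2_mult; now apply smooth2_of_t|].
    apply (smooth2_comp flat_exp (fun _ t => t ^ 2 - d ^ 2) smooth1_flat_exp).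
    apply smooth2_minus; [exact (smooth2_sqr _ (smooth2_coord false)) | apply smooth2_const]. }
  exists (fun t => (A0 - A t) * K t), d. repeat split; auto.
  - apply smooth1_of_smooth2, smooth2_mult; apply smooth2_of_t; auto.
    apply smooth1_of_smooth2, smooth2_minus; [apply smooth2_const | now apply smooth2_of_t].
  - rewrite HA0. ring.
  - assert (HA' : ex_derive (fun t => A0 - A t) 0)
      by (apply (ex_derive_minus (K := R_AbsRing) (V := R_NormedModule));
          auto using ex_derive_const, smooth1_ex_derive).
    rewrite Derive_mult, Derive_minus, Derive_const, HdA0, HA0; auto using ex_derive_const, smooth1_ex_derive.
    ring.
  - intros t Ht. unfold K. rewrite Hrho0 by auto. field. now apply HBnz.
Qed.

Section Perturbation.

Variables (f lam h : R -> R).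
Hypotheses (Hf : smooth1 f) (Hlam : smooth1 lam) (Hh : smooth1 h).
Hypotheses (Hlam0 : lam 0 = 0) (Hdlam0 : Derive lam 0 = 0).

Lemma Derive_perturb (t : R) :
  Derive (fun t => f t + lam t * h t) t = Derive f t + (Derive lam t * h t + lam t * Derive h t).
Proof.
  rewrite Derive_plus, Derive_mult; auto using smooth1_ex_derive, ex_derive_mult.
Qed.

Lemma Derive_perturb_0 : Derive (fun t => f t + lam t * h t) 0 = Derive f 0.
Proof. rewrite Derive_perturb, Hlam0, Hdlam0. ring. Qed.

Lemma Derive_n_2_perturb_0 : h 0 = 0 -> Derive_n (fun t => f t + lam t * h t) 2 0 = Derive_n f 2 0.
Proof.
  intros Hh0. simpl. rewrite (functional_extensionality _ _ Derive_perturb).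
  assert (Hf' := smooth1_Derive f Hf). assert (Hl' := smooth1_Derive lam Hlam).
  assert (Hh' := smooth1_Derive h Hh).
  rewrite (Derive_plus (Derive f)), (Derive_plus (fun t => Derive lam t * h t)),
    (Derive_mult (Derive lam) h), (Derive_mult lam (Derive h));
    auto using smooth1_ex_derive, ex_derive_mult, ex_derive_plus.
  rewrite Hh0, Hlam0, Hdlam0. rewrite !Rmult_0_l, !Rmult_0_r, !Rplus_0_r. reflexivity.
Qed.

End Perturbation.

Definition speed_sq (U : R -> R -> R * R) (s t : R) : R :=
  pd true (vx U) s t * pd true (vx U) s t + pd true (vy U) s t * pd true (vy U) s t.

Definition curvature_num (U : R -> R -> R * R) (s t : R) : R :=
  pd true (vx U) s t * pd true (pd true (vy U)) s t + pd true (vy U) s t * - pd true (pd true (vx U)) s t.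

Lemma speed_curve_at (U : R -> R -> R * R) (s t : R) :
  speed (curve_at U t) s = sqrt (speed_sq U s t).
Proof. reflexivity. Qed.

Lemma curvature_curve_at (U : R -> R -> R * R) (s t : R) :
  curvature (curve_at U t) s = curvature_num U s t / speed (curve_at U t) s ^ 3.
Proof. reflexivity. Qed.

Lemma speed_curvature_pos_near_0 (U : R -> R -> R * R) (L : R) : 0 < L ->
  smooth2 (vx U) -> smooth2 (vy U) ->
  (forall s, 0 <= s <= 2 * L -> 0 < speed (curve_at U 0) s /\ 0 < curvature (curve_at U 0) s) ->
  exists d, 0 < d /\ forall s t, 0 <= s <= 2 * L -> Rabs t <= d ->
    0 < speed (curve_at U t) s /\ 0 < curvature (curve_at U t) s.
Proof.
  intros HL H1 H2 H0.
  assert (Hsp : smooth2 (speed_sq U)) by (apply smooth2_plus; apply smooth2_mult; auto using smooth2_pd).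
  assert (Hcn : smooth2 (curvature_num U))
    by (apply smooth2_plus; apply smooth2_mult; repeat apply smooth2_pd; auto;
        apply (smooth2_ext (fun s t => -1 * pd true (pd true (vx U)) s t)); [intros; ring|];
        apply smooth2_scal; repeat apply smooth2_pd; auto).
  assert (Hsp0 : forall s, 0 <= s <= 2 * L -> 0 < speed_sq U s 0).
  { intros s Hs. destruct (H0 s Hs) as [Hv _]. rewrite speed_curve_at in Hv.
    destruct (Rle_lt_dec (speed_sq U s 0) 0); [rewrite sqrt_neg_0 in Hv; lra | assumption]. }
  assert (Hcn0 : forall s, 0 <= s <= 2 * L -> 0 < curvature_num U s 0).
  { intros s Hs. destruct (H0 s Hs) as [Hv Hc]. rewrite curvature_curve_at in Hc.
    assert (0 < speed (curve_at U 0) s ^ 3) by (apply pow_lt; auto).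
    apply (Rmult_lt_reg_r (/ speed (curve_at U 0) s ^ 3)); [now apply Rinv_0_lt_compat | lra]. }
  destruct (pos_on_strip (speed_sq U) 0 (2 * L) ltac:(lra)
    (fun s _ => smooth2_continuity_2d_pt _ s 0 Hsp) Hsp0) as [d1 [Hd1 Hpos1]].
  destruct (pos_on_strip (curvature_num U) 0 (2 * L) ltac:(lra)
    (fun s _ => smooth2_continuity_2d_pt _ s 0 Hcn) Hcn0) as [d2 [Hd2 Hpos2]].
  exists (Rmin d1 d2). split; [now apply Rmin_glb_lt|]. intros s t Hs Ht.
  assert (Hv : 0 < speed (curve_at U t) s)
    by (rewrite speed_curve_at; apply sqrt_lt_R0, Hpos1; auto; eapply Rle_trans; [exact Ht | apply Rmin_l]).
  split; [exact Hv|]. rewrite curvature_curve_at. apply Rdiv_lt_0_compat; [|now apply pow_lt].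
  apply Hpos2; auto. eapply Rle_trans; [exact Ht | apply Rmin_r].
Qed.

Section Variation.

Variables (x0 L : R) (g : R -> R * R) (V : R -> R -> R * R) (tV : R).
Hypothesis HL : 0 < L.
Hypothesis HV : admissible_variation x0 L g V tV.

Lemma smooth2_vx : smooth2 (vx V).
Proof. apply HV. Qed.

Lemma smooth2_vy : smooth2 (vy V).
Proof. apply HV. Qed.

Lemma variation_at_0 (s : R) : 0 <= s <= 2 * L -> vx V s 0 = cx g s /\ vy V s 0 = cy g s.
Proof. intros Hs. destruct HV as [_ [_ [_ [Hg0 _]]]]. unfold vx, vy, cx, cy. now rewrite Hg0. Qed.

Lemma area_at_0 : area_at (vx V) (vy V) L 0 = area L g.
Proof. rewrite <- area_curve_at. apply area_ext_interval; auto. apply HV. Qed.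

Lemma variation_ends (t : R) : - tV <= t <= tV -> V 0 t = (x0, 0) /\ V (2 * L) t = (- x0, 0).
Proof.
  intros Ht. destruct HV as [_ [_ [_ [_ Hadm]]]].
  destruct (Hadm t Ht) as [_ [_ [_ [_ [_ [E0 [E2 _]]]]]]]. now split.
Qed.

Lemma pd_t_variation_ends (s : R) : s = 0 \/ s = 2 * L -> pd false (vx V) s 0 = 0 /\ pd false (vy V) s 0 = 0.
Proof.
  intros Hs. assert (HtV : 0 < tV) by apply HV.
  destruct Hs as [-> | ->]; simpl; split;
    eapply (Derive_locally_const _ _ 0 tV HtV); intros t Ht;
    destruct (variation_ends t ltac:(lra)) as [E0 E2]; unfold vx, vy; rewrite ?E0, ?E2; reflexivity.
Qed.

Hypothesis Harc : arclength_param L g.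
Hypothesis Hfo : first_order_area_preserving L g V.

(* First variation of area: the normal velocity integrates to zero, and the remaining exact
   derivative vanishes because the endpoints are fixed. *)
Lemma Derive_area_at_0 : Derive (area_at (vx V) (vy V) L) 0 = 0.
Proof.
  assert (H1 := smooth2_vx). assert (H2 := smooth2_vy).
  set (N := fun s => pd false (vx V) s 0 * pd true (vy V) s 0 - pd true (vx V) s 0 * pd false (vy V) s 0).
  set (G := fun s t => vx V s t * pd false (vy V) s t - pd false (vx V) s t * vy V s t).
  assert (HN : smooth2 (fun s t => pd false (vx V) s t * pd true (vy V) s t - pd true (vx V) s t * pd false (vy V) s t))
    by (apply smooth2_minus; apply smooth2_mult; auto using smooth2_pd).
  assert (HG : smooth2 G) by (apply smooth2_minus; apply smooth2_mult; auto using smooth2_pd).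
  unfold area_at. rewrite Derive_scal, Derive_RInt_slice by (apply smooth2_area_density; auto).
  unfold RInt_slice. rewrite (RInt_ext _ (fun s => 2 * N s + pd true G s 0))
    by (intros s _; now rewrite pd_t_area_density).
  rewrite (RInt_plus (V := R_CompleteNormedModule) (fun s => 2 * N s)),
    (RInt_scal (V := R_CompleteNormedModule) N).
  2: exact (smooth2_ex_RInt _ 0 (2 * L) 0 HN).
  2: apply (ex_RInt_scal (V := R_CompleteNormedModule)); exact (smooth2_ex_RInt _ 0 (2 * L) 0 HN).
  2: exact (smooth2_ex_RInt _ 0 (2 * L) 0 (smooth2_pd true G HG)).
  assert (EN : RInt N 0 (2 * L) = 0).
  { etransitivity; [|exact Hfo]. apply RInt_ext. rewrite Rmin_left, Rmax_right by lra. intros s Hs.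
    assert (Dx : pd true (vx V) s 0 = Derive (cx g) s)
      by (apply (Derive_ext_interior _ _ 0 (2 * L)); auto; intros u Hu; apply variation_at_0; lra).
    assert (Dy : pd true (vy V) s 0 = Derive (cy g) s)
      by (apply (Derive_ext_interior _ _ 0 (2 * L)); auto; intros u Hu; apply variation_at_0; lra).
    unfold N. rewrite Dx, Dy. unfold normal. rewrite (Harc s ltac:(lra)).
    unfold dot, var_velocity, perp, vel, vx, vy, pd. simpl. field. }
  assert (EG : RInt (fun s => pd true G s 0) 0 (2 * L) = G (2 * L) 0 - G 0 0).
  { apply (RInt_Derive (fun s => G s 0)); intros s _.
    - exact (smooth2_ex_derive_s G s 0 HG).
    - exact (smooth1_continuous _ s (smooth2_slice_s (pd true G) 0 (smooth2_pd true G HG))). }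
  assert (EG0 : forall s, s = 0 \/ s = 2 * L -> G s 0 = 0).
  { intros s Hs. destruct (pd_t_variation_ends s Hs) as [E1 E2]. unfold G. rewrite E1, E2. ring. }
  rewrite EN, EG, !EG0 by auto. unfold scal, plus; simpl. unfold mult, plus; simpl. ring.
Qed.

Lemma area_at_bump_neq_0 (s0 eta r : R) :
  0 < eta -> 0 < s0 - eta -> s0 + eta < 2 * L -> 0 < r ->
  (forall s, Rabs (s - s0) < eta -> 0 < Derive (cy g) s0 * Derive (cy g) s) ->
  (forall s, 0 <= s <= 2 * L -> eta <= Rabs (s - s0) -> r <= sqdist g s0 s) ->
  area_at (fun s t => bump (cx g s0) (cy g s0) r (vx V s t) (vy V s t)) (vy V) L 0 <> 0.
Proof.
  intros Heta Hs1 Hs2 Hr Hsign Hfar.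
  set (W := fun s => bump (cx g s0) (cy g s0) r (vx V s 0) (vy V s 0)).
  set (Y := fun s => vy V s 0).
  assert (HW : smooth1 W)
    by (apply (smooth2_slice_s (fun s t => bump _ _ r (vx V s t) (vy V s t))), smooth2_bump;
        auto using smooth2_vx, smooth2_vy).
  assert (HY : smooth1 Y) by apply smooth2_slice_s, smooth2_vy.
  assert (HWg : forall s, 0 <= s <= 2 * L -> W s = bump (cx g s0) (cy g s0) r (cx g s) (cy g s))
    by (intros s Hs; unfold W; now destruct (variation_at_0 s Hs) as [-> ->]).
  assert (HWfar : forall s, 0 <= s <= 2 * L -> eta <= Rabs (s - s0) -> W s = 0)
    by (intros s Hs Hd; rewrite HWg by auto; apply bump_outside, Hfar; auto).
  assert (HDY : forall s, 0 < s < 2 * L -> Derive Y s = Derive (cy g) s)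
    by (intros s Hs; apply (Derive_ext_interior _ _ 0 (2 * L)); auto; intros u Hu; apply variation_at_0; lra).
  change (/ 2 * RInt (fun s => W s * Derive Y s - Derive W s * Y s) 0 (2 * L) <> 0).
  assert (HW0 : W 0 = 0) by (apply HWfar; [lra | rewrite Rabs_left1; lra]).
  assert (HW2 : W (2 * L) = 0) by (apply HWfar; [lra | rewrite Rabs_right; lra]).
  rewrite (RInt_minus (V := R_CompleteNormedModule)), (RInt_Derive_mult_vanishing W Y) by
    (auto; apply (@ex_RInt_continuous R_CompleteNormedModule); intros x _;
     apply (continuous_mult (K := R_AbsRing)); auto using smooth1_continuous, smooth1_Derive).
  assert (HI : RInt (fun s => W s * Derive Y s) 0 (2 * L) <> 0).
  { apply (RInt_mult_Derive_neq_0 W Y 0 (2 * L) s0 (Derive (cy g) s0)); auto; [lra | | | ].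
    - rewrite HWg by lra. apply flat_exp_pos. unfold Rminus at 2 3. rewrite !Rplus_opp_r. simpl. lra.
    - rewrite HDY by lra. apply Hsign. rewrite Rminus_diag, Rabs_R0. exact Heta.
    - intros s Hs. destruct (Rlt_le_dec (Rabs (s - s0)) eta) as [Hnear | Hout].
      + rewrite HDY by lra.
        replace (Derive (cy g) s0 * (W s * Derive (cy g) s)) with (W s * (Derive (cy g) s0 * Derive (cy g) s)) by ring.
        apply Rmult_le_pos; [apply flat_exp_ge0 | apply Rlt_le, Hsign, Hnear].
      + rewrite HWfar by lra. lra. }
  unfold minus, plus, opp; simpl. lra.
Qed.


Lemma shift_x_admissible_at (psi : R -> R -> R) (M : R) (lam : R -> R) (t : R) :
  let U := shift_x V lam (fun s t => psi (vx V s t) (vy V s t)) in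
  smooth2 (vx U) -> (forall x y, exists d, is_derive (fun x => psi x y) x d /\ Rabs d <= M) ->
  psi x0 0 = 0 -> psi (- x0) 0 = 0 -> - tV <= t <= tV -> Rabs (lam t) * M < 1 ->
  (forall s, 0 <= s <= 2 * L -> 0 < speed (curve_at U t) s /\ 0 < curvature (curve_at U t) s) ->
  admissible x0 L (curve_at U t).
Proof.
  intros U HU1 HM Hpsi0 Hpsi2 Ht Hshear Hpos.
  destruct HV as [_ [_ [_ [_ Hadm]]]].
  destruct (Hadm t Ht) as [_ [_ [_ [_ [Hinj [HVa [HVb Hy]]]]]]].
  split; [exact (smooth2_slice_s _ t HU1)|]. split; [exact (smooth2_slice_s _ t smooth2_vy)|].
  split; [intros s Hs; apply Hpos, Hs|]. split; [intros s Hs; apply Hpos, Hs|].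
  split; [|split; [|split]].
  - intros s1 s2 Hs1 Hs2 Heq. apply Hinj; auto.
    unfold curve_at, U, shift_x in Heq. injection Heq as Ex Ey.
    unfold curve_at. apply pair_eq; [|exact Ey].
    fold (vy V s1 t) (vy V s2 t) in Ey. rewrite <- Ey in Ex.
    exact (shear_injective psi M (lam t) _ _ _ (fun x => HM x _) Hshear Ex).
  - unfold curve_at in HVa |- *. unfold U, shift_x, vx, vy. rewrite HVa. simpl.
    now rewrite Hpsi0, Rmult_0_r, Rplus_0_r.
  - unfold curve_at in HVb |- *. unfold U, shift_x, vx, vy. rewrite HVb. simpl.
    now rewrite Hpsi2, Rmult_0_r, Rplus_0_r.
  - exact Hy.
Qed.

Lemma shift_x_admissible (psi : R -> R -> R) (M : R) (lam : R -> R) (d0 : R) :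
  smooth2 (fun s t => psi (vx V s t) (vy V s t)) ->
  (forall x y, exists d, is_derive (fun x => psi x y) x d /\ Rabs d <= M) ->
  psi x0 0 = 0 -> psi (- x0) 0 = 0 -> smooth1 lam -> lam 0 = 0 -> 0 < d0 ->
  exists d, 0 < d <= d0 /\
    admissible_variation x0 L g (shift_x V lam (fun s t => psi (vx V s t) (vy V s t))) d.
Proof.
  intros Hw HM Hpsi0 Hpsi2 Hlam Hlam0 Hd0.
  set (U := shift_x V lam (fun s t => psi (vx V s t) (vy V s t))).
  assert (HU1 : smooth2 (vx U))
    by (apply smooth2_plus; [apply smooth2_vx | apply smooth2_mult; auto using smooth2_of_t]).
  assert (HU0 : forall s, U s 0 = V s 0)
    by (intros s; unfold U, shift_x, vx, vy; rewrite Hlam0, Rmult_0_l, Rplus_0_r; now destruct (V s 0)).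
  assert (HtV : 0 < tV) by apply HV.
  destruct (speed_curvature_pos_near_0 U L HL HU1 smooth2_vy) as [d1 [Hd1 Hpos]].
  { intros s Hs. replace (curve_at U 0) with (curve_at V 0)
      by (apply functional_extensionality; intro u; symmetry; apply HU0).
    assert (HV0 : admissible x0 L (curve_at V 0)) by (apply HV; lra).
    destruct HV0 as [_ [_ [Hv [Hc _]]]]. auto. }
  destruct (Rabs_mult_lt_1_near_0 lam M (smooth1_continuity_pt _ _ Hlam) Hlam0) as [d2 [Hd2 Hshear]].
  set (d := Rmin d0 (Rmin tV (Rmin d1 d2))).
  assert (Hle : 0 < d /\ d <= d0 /\ d <= tV /\ d <= d1 /\ d <= d2).
  { unfold d. pose proof (Rmin_l d0 (Rmin tV (Rmin d1 d2))). pose proof (Rmin_r d0 (Rmin tV (Rmin d1 d2))).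
    pose proof (Rmin_l tV (Rmin d1 d2)). pose proof (Rmin_r tV (Rmin d1 d2)).
    pose proof (Rmin_l d1 d2). pose proof (Rmin_r d1 d2).
    split; [repeat apply Rmin_glb_lt|]; lra. }
  exists d. split; [lra|]. split; [lra|]. split; [exact HU1|]. split; [exact smooth2_vy|]. split.
  { intros s Hs. rewrite HU0. apply HV, Hs. }
  intros t Ht. assert (Hta : Rabs t <= d) by (apply Rabs_le_between; lra).
  apply shift_x_admissible_at with M; auto; [lra | apply Hshear; lra |].
  intros s Hs. apply Hpos; auto; lra.
Qed.

End Variation.

Theorem mainTheorem4 :
  forall (x0 L : R), 0 < x0 -> 0 < L ->
  forall (g : R -> R * R), admissible x0 L g -> arclength_param L g ->
  forall (V : R -> R -> R * R) (tV : R),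
    admissible_variation x0 L g V tV ->
    first_order_area_preserving L g V ->
    exists (Vt : R -> R -> R * R) (tVt : R),
      admissible_variation x0 L g Vt tVt /\
      area_preserving L g Vt tVt /\
      (forall s, 0 <= s <= 2 * L -> var_velocity Vt s = var_velocity V s) /\
      (forall s, (0 <= s <= L / 2 \/ 3 * L / 2 <= s <= 2 * L) ->
         var_acceleration Vt s = var_acceleration V s).
Proof.
  intros x0 L Hx0 HL g Hg Harc V tV HV Hfo.
  assert (H1 := smooth2_vx x0 L g V tV HV). assert (H2 := smooth2_vy x0 L g V tV HV).
  destruct (bump_site x0 L g HL Hg) as [s0 [eta [r [Hs1 [Hs2 [Heta [Hr [Hsign Hfar]]]]]]]].
  set (psi := bump (cx g s0) (cy g s0) r). set (w := fun s t => psi (vx V s t) (vy V s t)).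
  assert (Hw : smooth2 w) by now apply smooth2_bump.
  assert (Hpsi : forall s, 0 <= s <= 2 * L -> eta <= Rabs (s - s0) -> psi (cx g s) (cy g s) = 0)
    by (intros s Hs Hd; now apply bump_outside, Hfar).
  assert (HB : area_at w (vy V) L 0 <> 0) by (apply (area_at_bump_neq_0 x0 L g V tV HL HV s0 eta r); auto; lra).
  destruct (area_correction _ _ _ (smooth1_area_at _ _ L H1 H2) (smooth1_area_at _ _ L Hw H2) HB
    (area_at_0 x0 L g V tV HL HV)
    (Derive_area_at_0 x0 L g V tV HL HV Harc Hfo)) as [lam [dA [Hlam [Hlam0 [Hdlam0 [HdA Hcorr]]]]]].
  destruct (bump_x_derivative_bounded (cx g s0) (cy g s0) r Hr) as [M [_ HM]].
  destruct Hg as [_ [_ [_ [_ [_ [Hg0 [Hg2 _]]]]]]].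
  destruct (shift_x_admissible x0 L g V tV HL HV psi M lam dA Hw HM) as [d [Hd Hadm]]; auto.
  { specialize (Hpsi 0). unfold cx, cy in Hpsi. rewrite Hg0 in Hpsi.
    apply Hpsi; [lra | rewrite Rabs_left1; lra]. }
  { specialize (Hpsi (2 * L)). unfold cx, cy in Hpsi. rewrite Hg2 in Hpsi.
    apply Hpsi; [lra | rewrite Rabs_right; lra]. }
  exists (shift_x V lam w), d. split; [|split; [|split]].
  - exact Hadm.
  - intros t Ht. rewrite area_shift_x by auto. apply Hcorr, Rabs_le_between. lra.
  - intros s _. apply pair_eq; [|reflexivity].
    apply Derive_perturb_0; auto using smooth2_slice_t.
  - intros s Hs. apply pair_eq; [|reflexivity].
    apply Derive_n_2_perturb_0; auto using smooth2_slice_t.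
    unfold w. destruct (variation_at_0 x0 L g V tV HV s ltac:(lra)) as [-> ->].
    apply Hpsi; [lra|]. destruct Hs; [rewrite Rabs_left1 | rewrite Rabs_right]; lra.
Qed.
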